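(* Let $G$ be a connected graph of order $n\geq 5$ and let $k$ be an integer with $3\leq k\leq n$. Then $px_k(G)=n-2$ if and only if $G\cong S_n^+$ or $G\cong G_0$, where $S_n^+$ is the graph obtained from the star $S_n=K_{1,n-1}$ by adding one edge joining two of its leaves, and $G_0$ is the tree on $n$ vertices obtained from the star $K_{1,n-2}$ by attaching one new pendant vertex to one of its leaves (equivalently, obtained from $K_{1,n-1}$ by subdividing one edge once and deleting a leaf; it is the unique tree on $n$ vertices with maximum degree $n-2$).
   Context: All graphs are finite, simple, undirected and connected. An edge-coloring of a graph assigns a color to each edge (adjacent edges may receive the same color). A tree in an edge-colored graph is proper if any two adjacent edges of the tree receive different colors. For $S\subseteq V(G)$, an $S$-tree is a subgraph of $G$ that is a tree containing all vertices of $S$. For a connected graph $G$ of order $n$ and an integer $k$ with $2\le k\le n$, an edge-coloring of $G$ is a $k$-proper coloring if for every set $S$ of $k$ vertices of $G$ there exists a proper $S$-tree in $G$. The $k$-proper index $px_k(G)$ is the minimum number of colors used in a $k$-proper coloring of $G$. *)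

From mathcomp Require Import all_boot.
Set Implicit Arguments. Unset Strict Implicit. Unset Printing Implicit Defensive.

Definition simple_graph (T : finType) (e : rel T) : Prop :=
  symmetric e /\ irreflexive e.

Definition connected_graph (T : finType) (e : rel T) : Prop :=
  forall x y : T, connect e x y.

Definition edge_coloring (T : finType) (e : rel T) (m : nat) (c : T -> T -> nat) : Prop :=
  forall x y, e x y -> c x y = c y x /\ c x y < m.

Definition subgraph (T : finType) (e : rel T) (V : {set T}) (f : rel T) : Prop :=
  symmetric f /\ (forall x y, f x y -> e x y /\ x \in V /\ y \in V).

Definition is_tree (T : finType) (V : {set T}) (f : rel T) : Prop :=
  (exists x, x \in V) /\
  (forall x y, x \in V -> y \in V -> connect f x y) /\
  (forall s : seq T, uniq s -> 3 <= size s -> ~~ cycle f s).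

Definition proper_tree (T : finType) (c : T -> T -> nat) (f : rel T) : Prop :=
  forall x y z, f x y -> f x z -> y != z -> c x y != c x z.

Definition k_proper_coloring (T : finType) (e : rel T) (k m : nat) (c : T -> T -> nat) : Prop :=
  edge_coloring e m c /\
  forall S : {set T}, #|S| = k ->
    exists (V : {set T}) (f : rel T),
      subgraph e V f /\ is_tree V f /\ S \subset V /\ proper_tree c f.

Definition px_k_eq (T : finType) (e : rel T) (k p : nat) : Prop :=
  (exists c, k_proper_coloring e k p c) /\
  (forall m c, k_proper_coloring e k m c -> p <= m).

Definition isomorphic (T : finType) (e : rel T) (n : nat) (R : rel 'I_n) : Prop :=
  exists phi : T -> 'I_n, bijective phi /\ forall x y, e x y = R (phi x) (phi y).

(* S_n^+ : star with centre 0, leaves 1..n-1, plus the edge {1,2}. *)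
Definition Splus (n : nat) : rel 'I_n := fun i j =>
  let a := nat_of_ord i in let b := nat_of_ord j in
  [|| (a == 0) && (b != 0), (b == 0) && (a != 0),
      (a == 1) && (b == 2) | (a == 2) && (b == 1)].

(* G_0 : star with centre 0 and leaves 1..n-2, plus pendant vertex n-1 attached to 1. *)
Definition G0 (n : nat) : rel 'I_n := fun i j =>
  let a := nat_of_ord i in let b := nat_of_ord j in
  [|| (a == 0) && (1 <= b <= n - 2), (b == 0) && (1 <= a <= n - 2),
      (a == 1) && (b == n - 1) | (b == 1) && (a == n - 1)].
Arguments isomorphic [T] e n R.
Arguments Splus n : clear implicits.
Arguments G0 n : clear implicits.

From mathcomp Require Import all_boot zify.
Set Implicit Arguments. Unset Strict Implicit. Unset Printing Implicit Defensive.

Lemma exists_notin (T : finType) (A : {set T}) (s : seq T) :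
  size s < #|A| -> exists2 w, w \in A & w \notin s.
Proof.
move=> lt_sA; have /subsetPn[w wA ws] : ~~ (A \subset s).
  by apply/negP => /subset_leq_card/leq_trans/(_ (card_size s)); lia.
by exists w.
Qed.

Lemma uniq_size_le_card (T : finType) (A : {set T}) (s : seq T) :
  uniq s -> {subset s <= A} -> size s <= #|A|.
Proof. by move=> us sA; rewrite -(card_uniqP us); apply/subset_leq_card/subsetP. Qed.

Lemma exists_superset_card (T : finType) (X : {set T}) k :
  #|X| <= k <= #|T| -> exists2 S : {set T}, X \subset S & #|S| = k.
Proof.
move=> /andP[le_Xk]; rewrite -(subnKC le_Xk); move: {le_Xk}(k - _) => d.
elim: d X => [|d IH] X le_T.
  by exists X; rewrite ?addn0.
have [v _ vX] := @exists_notin T setT (enum X) ltac:(rewrite cardsT -cardE; lia).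
rewrite mem_enum in vX.
have [S sub cS] : exists2 S : {set T}, v |: X \subset S & #|S| = #|v |: X| + d.
  by apply: (IH (v |: X)); rewrite cardsU1 vX; lia.
by exists S; [apply: subset_trans sub; apply: subsetUr | rewrite cS cardsU1 vX addSnnS].
Qed.

Lemma card_le_of_injective_bounded (T : finType) (A : {set T}) (g : T -> nat) m :
  {in A &, injective g} -> (forall v, v \in A -> g v < m) -> #|A| <= m.
Proof.
move=> g_inj g_lt; rewrite cardE -(size_map g) -[m](size_iota 0 m).
apply: uniq_leq_size; first by rewrite map_inj_in_uniq ?enum_uniq // => x y; rewrite !mem_enum; exact: g_inj.
by move=> _ /mapP[v vA ->]; rewrite mem_iota g_lt // -mem_enum.
Qed.

Lemma card_notin (T : finType) (s : seq T) :
  uniq s -> #|[set v | v \notin s]| = #|T| - size s.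
Proof.
move=> us; have -> : [set v | v \notin s] = ~: [set v in s] by apply/setP => v; rewrite !inE.
by rewrite cardsCs setCK cardsE (card_uniqP us).
Qed.

Lemma connect_exit_edge (T : finType) (f : rel T) (A : {set T}) x y :
  connect f x y -> x \in A -> y \notin A ->
  exists u v, [/\ u \in A, v \notin A & f u v].
Proof.
move=> /connectP[p pth ->]; elim: p x pth => [|z p IH] x /=; first by move=> _ xA; rewrite xA.
move=> /andP[fxz pz] xA; case zA: (z \in A); first exact: IH.
by exists x, z; rewrite zA.
Qed.

Lemma pick_two_avoiding (T : finType) (A : {set T}) (p1 p2 : T) :
  2 <= #|A| -> (p1 = p2 -> p1 \in A -> 3 <= #|A|) ->
  exists w1 w2, [/\ w1 \in A, w2 \in A, w1 != w2, w1 != p1 & w2 != p2].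
Proof.
move=> A2 A3; have [p2A|p2A] := boolP (p2 \in A); last first.
  have [w1 w1A] := @exists_notin T A [:: p1] A2; rewrite inE => w1p1.
  have [w2 w2A] := @exists_notin T A [:: w1] A2; rewrite inE => w2w1.
  by exists w1, w2; split=> //; [rewrite eq_sym | apply: contraNneq p2A => <-].
have [p12|p12] := eqVneq p1 p2.
  have [w1 w1A] := @exists_notin T A [:: p1] A2; rewrite inE => w1p1.
  have [w2 w2A] := @exists_notin T A [:: p1; w1] (A3 p12 ltac:(by rewrite p12)).
  rewrite !inE negb_or => /andP[w2p1 w2w1].
  by exists w1, w2; split=> //; [rewrite eq_sym | rewrite -p12].
have [w2 w2A] := @exists_notin T A [:: p2] A2; rewrite inE => w2p2.
by exists p2, w2; split; rewrite // eq_sym.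
Qed.
Lemma uniq_size_le_card_type (T : finType) (s : seq T) : uniq s -> size s <= #|T|.
Proof. by move=> us; rewrite -cardsT; apply: uniq_size_le_card => // x; rewrite inE. Qed.

Section ParentTree.
Variables (T : finType) (e : rel T) (r : T) (par : T -> T) (dep : T -> nat).
Hypothesis par_edge : forall v, v != r -> e (par v) v.
Hypothesis dep_par : forall v, v != r -> dep (par v) < dep v.

Definition is_child x y := (y != r) && (par y == x).
Definition parent_rel : rel T := fun x y => is_child x y || is_child y x.

Definition parent_edges_apart u w := [&& par u != par w, par u != w & par w != u].

Lemma parent_rel_sym : symmetric parent_rel.
Proof. by move=> x y; rewrite /parent_rel orbC. Qed.

Lemma parent_of_deeper x y : parent_rel x y -> dep y <= dep x -> par x = y.
Proof.
case/orP=> /andP[nr /eqP <-] //; have := dep_par nr; lia.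
Qed.

Lemma connect_parent_rel_root x : connect parent_rel x r.
Proof.
move: {-1}(dep x).+1 (ltnSn (dep x)) => n; elim: n x => // n IH x lt_xn.
have [-> // | xr] := eqVneq x r.
apply: connect_trans (IH (par x) _); last by have := dep_par xr; lia.
apply: connect1.
by rewrite /parent_rel /is_child xr eqxx orbT.
Qed.

Lemma connect_parent_rel x y : connect parent_rel x y.
Proof.
apply: connect_trans (connect_parent_rel_root x) _.
by rewrite (sym_connect_sym parent_rel_sym) connect_parent_rel_root.
Qed.

Lemma parent_rel_acyclic s : uniq s -> 3 <= size s -> ~~ cycle parent_rel s.
Proof.
move=> us s3; apply/negP => cs.
have [x0 x0s] : exists x0, x0 \in s by case: s s3 {us cs} => // x0 s _; exists x0; rewrite mem_head.
case: (@arg_maxnP T x0 (mem s) dep x0s) => x xs xmax.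
have [i [|y t] def_s] := rot_to xs.
  by move: s3; rewrite -(size_rot i) def_s.
move: us cs s3; rewrite -(rot_uniq i) -(rot_cycle i) -(size_rot i) def_s.
have ins w : w \in x :: y :: t -> w \in s by rewrite -def_s mem_rot.
case/lastP: t def_s ins => [|t z] //= _ ins.
rewrite rcons_path last_rcons mem_rcons inE => /andP[_ /andP[yz _]] /and3P[xy _ zx] _.
have /parent_of_deeper py := xy; rewrite parent_rel_sym in zx.
have /parent_of_deeper pz := zx.
have deeper w : w \in [:: x, y & rcons t z] -> dep w <= dep x by move/ins/xmax.
move: yz; rewrite -(py (deeper _ _)) -(pz (deeper _ _)) ?eqxx //;
  by rewrite !inE ?mem_rcons ?inE eqxx !orbT.
Qed.
Lemma par_neq v : v != r -> par v != v.
Proof. by move=> vr; apply/eqP => pv; have := dep_par vr; rewrite pv ltnn. Qed.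

Definition parent_tree_color (L : T -> nat) x y :=
  if is_child x y then L y else if is_child y x then L x else 0.

Lemma parent_tree_colorE L x y : parent_rel x y ->
  exists2 u, u != r &
    parent_tree_color L x y = L u /\ (x == par u) && (y == u) || (x == u) && (y == par u).
Proof.
rewrite /parent_tree_color; case/orP=> [xy|yx]; first rewrite xy.
  by case/andP: xy => yr /eqP pyx; exists y; rewrite // pyx !eqxx.
case: ifP => [xy|_]; last by rewrite yx; case/andP: yx => xr /eqP pxy; exists x; rewrite // pxy !eqxx orbT.
by case/andP: xy => yr /eqP pyx; exists y; rewrite // pyx !eqxx.
Qed.

Lemma parent_tree_color_proper L :
  (forall u w, u != r -> w != r -> u != w -> L u = L w -> parent_edges_apart u w) ->
  proper_tree (parent_tree_color L) parent_rel.
Proof.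
move=> L_apart x y z /(parent_tree_colorE L)[u ur [-> exy]].
move=> /(parent_tree_colorE L)[w wr [-> exz]] yz; apply/eqP => Luw.
have pu : par u <> u by apply/eqP/par_neq.
move/eqP: yz => yz; case/orP: exy => /andP[/eqP ? /eqP ?];
  case/orP: exz => /andP[/eqP ? /eqP ?]; have [?|/eqP uw] := eqVneq u w;
  try congruence;
  by case/and3P: (L_apart u w ur wr (introN eqP uw) Luw) => /eqP ? /eqP ? /eqP ?; congruence.
Qed.
Lemma is_child_asym x y : is_child x y -> is_child y x -> False.
Proof.
move=> /andP[yr /eqP pyx] /andP[xr /eqP pxy].
by have := dep_par xr; have := dep_par yr; rewrite pyx pxy; lia.
Qed.

Lemma parent_tree_color_sym L x y : parent_tree_color L x y = parent_tree_color L y x.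
Proof.
rewrite /parent_tree_color; case: ifP => [xy|_]; case: ifP => // yx.
by case: (is_child_asym xy yx).
Qed.

Hypothesis e_sym : symmetric e.

Lemma parent_tree_k_proper L m k :
  0 < m -> (forall v, v != r -> L v < m) ->
  (forall u w, u != r -> w != r -> u != w -> L u = L w -> parent_edges_apart u w) ->
  k_proper_coloring e k m (parent_tree_color L).
Proof.
move=> m_gt0 L_lt L_apart; split.
  move=> x y _; split; first exact: parent_tree_color_sym.
  have [xy|nxy] := boolP (parent_rel x y); last first.
    by move: nxy; rewrite /parent_rel /parent_tree_color negb_or => /andP[/negbTE-> /negbTE->].
  by have [u ur [-> _]] := parent_tree_colorE L xy; apply: L_lt.
move=> S _; exists setT, parent_rel; split; [split|split; [split|split]] => //.
- exact: parent_rel_sym.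
- move=> x y /orP[] /andP[vr /eqP <-]; rewrite !inE; split => //.
    exact: par_edge.
  by rewrite e_sym par_edge.
- by exists r.
- by split=> [x y _ _|]; [apply: connect_parent_rel | apply: parent_rel_acyclic].
- exact: parent_tree_color_proper.
Qed.
Lemma parent_edges_apart_sym u w : parent_edges_apart u w = parent_edges_apart w u.
Proof. by apply/and3P/and3P => -[? ? ?]; split; rewrite // eq_sym. Qed.

Lemma matched_parent_tree_coloring (B : {set T}) (mate : T -> T) k :
  r \notin B -> {in B &, injective mate} ->
  (forall b, b \in B -> mate b \notin r |: B) ->
  (forall b, b \in B -> parent_edges_apart b (mate b)) ->
  #|B|.+1 < #|T| -> exists c, k_proper_coloring e k (#|T| - #|B|.+1) c.
Proof.
move=> rB mate_inj mate_out mate_apart B_lt.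
pose rep v := if v \in B then mate v else v.
pose C := ~: (r |: B).
have cardC : #|C| = #|T| - #|B|.+1.
  by have := cardsC (r |: B); rewrite cardsU1 rB /C /=; lia.
have rep_in v : v != r -> rep v \in C.
  by move=> vr; rewrite /rep; case: ifP => [/mate_out|vB]; rewrite !inE ?vB ?orbF.
exists (parent_tree_color (fun v => index (rep v) (enum C))); rewrite -cardC.
apply: parent_tree_k_proper => [|v vr|u w ur wr uw].
- by rewrite cardC; lia.
- by rewrite cardE index_mem mem_enum rep_in.
have rep_enum v : v != r -> rep v \in enum C by rewrite mem_enum; apply: rep_in.
move=> /(index_inj r (rep_enum u ur) (rep_enum w wr)).
rewrite /rep; case: ifP => uB; case: ifP => wB euw.
- by rewrite (mate_inj u w uB wB euw) eqxx in uw.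
- by rewrite -euw mate_apart.
- by rewrite euw parent_edges_apart_sym mate_apart.
- by rewrite euw eqxx in uw.
Qed.
Lemma one_merge_coloring a b k :
  uniq [:: r; a; b] -> parent_edges_apart b a ->
  exists c, k_proper_coloring e k (#|T| - 2) c.
Proof.
move=> u3 apart_ba; have /= T3 := uniq_size_le_card_type u3.
move: u3; rewrite /= !inE !negb_or => /and3P[/andP[ra rb] ab _].
have := @matched_parent_tree_coloring [set b] (fun=> a) k; rewrite cards1; apply.
- by rewrite inE.
- by move=> x y /set1P-> /set1P->.
- by move=> _ _; rewrite !inE negb_or eq_sym ra.
- by move=> x /set1P->.
- exact: T3.
Qed.

Lemma two_merges_coloring a1 b1 a2 b2 k :
  uniq [:: r; a1; b1; a2; b2] -> parent_edges_apart b1 a1 -> parent_edges_apart b2 a2 ->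
  exists c, k_proper_coloring e k (#|T| - 3) c.
Proof.
move=> u5 apart1 apart2.
have /= T5 := uniq_size_le_card_type u5.
move: u5; rewrite /= !inE !negb_or.
move=> /and5P[/and4P[ra1 rb1 ra2 rb2] /and3P[a1b1 a1a2 a1b2] /andP[b1a2 b1b2] a2b2 _].
have := @matched_parent_tree_coloring [set b1; b2] (fun v => if v == b1 then a1 else a2) k.
rewrite cards2 b1b2; apply.
- by rewrite !inE negb_or rb1.
- move=> x y /set2P[]-> /set2P[]->; rewrite ?eqxx ?(eq_sym b2) ?(negbTE b1b2) // => /eqP.
    by rewrite (negbTE a1a2).
  by rewrite eq_sym (negbTE a1a2).
- move=> x /set2P[]->; rewrite ?eqxx ?(eq_sym b2) ?(negbTE b1b2) !inE !negb_or.
    by rewrite [a1 == r]eq_sym ra1 a1b1 a1b2.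
  by rewrite [a2 == r]eq_sym ra2 [a2 == b1]eq_sym b1a2 a2b2.
- by move=> x /set2P[]->; rewrite ?eqxx ?(eq_sym b2) ?(negbTE b1b2).
- exact: ltnW T5.
Qed.
End ParentTree.

Definition px_le (T : finType) (e : rel T) (m : nat) :=
  forall k, exists c, k_proper_coloring e k m c.

Lemma edge_neq (T : finType) (e : rel T) x y : simple_graph e -> e x y -> x != y.
Proof. by move=> [_ irr] exy; apply: contraTneq exy => ->; rewrite irr. Qed.

Ltac neq_simpl :=
  repeat match goal with
  | H : is_true (?x != ?y) |- context [?x == ?y] => rewrite (negbTE H)
  | H : is_true (?x != ?y) |- context [?y == ?x] => rewrite (eq_sym y x) (negbTE H)
  end; rewrite ?eqxx /= ?andbT ?andbF ?orbT ?orbF.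

Ltac distinct :=
  rewrite /= ?inE ?negb_or; repeat (apply/andP; split); by rewrite // eq_sym.

Section LeavesMoved.
Variables (T : finType) (e : rel T) (r : T).
Hypothesis e_simple : simple_graph e.

Lemma one_leaf_moved_coloring b p :
  4 <= #|T| -> uniq [:: r; b; p] -> e p b -> (forall v, v \notin [:: r; b] -> e r v) ->
  px_le e (#|T| - 2).
Proof.
move=> T4 urbp epb er k; have [x _] := @exists_notin T setT [:: r; b; p] ltac:(by rewrite cardsT).
move: urbp; rewrite /= !inE !negb_or => /and3P[/andP[rb rp] bp _] /and3P[xr xb xp].
pose par v := if v == b then p else r.
pose dep v := if v == r then 0 else if v == b then 2 else 1.
apply: (@one_merge_coloring T e r par dep _ _ e_simple.1 x b).
- move=> v vr; rewrite /par; case: ifP => [/eqP-> //|vb].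
  by apply: er; rewrite !inE negb_or vr vb.
- move=> v vr; rewrite /dep /par (negbTE vr); have [_|_] := eqVneq v b.
    by rewrite [p == r]eq_sym (negbTE rp) [p == b]eq_sym (negbTE bp).
  by rewrite eqxx.
- distinct.
- by rewrite /parent_edges_apart /par eqxx (negbTE xb) (eq_sym p r) rp (eq_sym p x) xp rb.
Qed.

Lemma two_leaves_moved_coloring b1 p1 b2 p2 :
  5 <= #|T| -> uniq [:: r; b1; b2] -> p1 != r -> p2 != r -> p1 != p2 ->
  ~~ ((p1 == b2) && (p2 == b1)) -> e p1 b1 -> e p2 b2 ->
  (forall v, v \notin [:: r; b1; b2] -> e r v) -> px_le e (#|T| - 3).
Proof.
move=> T5 u3 p1r p2r p12 no_cycle ep1 ep2 er k.
have p1b1 := edge_neq e_simple ep1; have p2b2 := edge_neq e_simple ep2.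
have [x [y [xA yA xy xp1 yp2]]] : exists x y,
    [/\ x \in [set v | v \notin [:: r; b1; b2]], y \in [set v | v \notin [:: r; b1; b2]],
        x != y, x != p1 & y != p2].
  by apply: pick_two_avoiding; rewrite ?card_notin //=; [rewrite ltn_subRL; exact: T5 | move/eqP: p12].
move: u3 xA yA; rewrite /= !inE !negb_or.
move=> /and3P[/andP[rb1 rb2] b12 _] /and3P[xr xb1 xb2] /and3P[yr yb1 yb2].
pose par v := if v == b1 then p1 else if v == b2 then p2 else r.
pose dep v := if v == r then 0 else if v == b1 then (if p1 == b2 then 3 else 2)
  else if v == b2 then (if p2 == b1 then 3 else 2) else 1.
apply: (@two_merges_coloring T e r par dep _ _ e_simple.1 x b1 y b2).
- move=> v vr; rewrite /par; case: ifP => [/eqP-> //|vb1]; case: ifP => [/eqP-> //|vb2].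
  by apply: er; rewrite !inE !negb_or vr vb1 vb2.
- move=> v vr; rewrite /dep /par (negbTE vr).
  have [_|_] /= := eqVneq v b1.
    rewrite (negbTE p1r) (negbTE p1b1); have [p1b2|//] := eqVneq p1 b2.
    by move: no_cycle; rewrite p1b2 eqxx /= => /negbTE->.
  have [_|_] /= := eqVneq v b2; last by rewrite eqxx.
  rewrite (negbTE p2r) (negbTE p2b2).
  have [p2b1|//] := eqVneq p2 b1.
  by move: no_cycle; rewrite p2b1 eqxx andbT => /negbTE->.
- distinct.
- by rewrite /parent_edges_apart /par eqxx (negbTE xb1) (negbTE xb2) p1r (eq_sym p1 x) xp1 rb1.
- by rewrite /parent_edges_apart /par eqxx (eq_sym b2) (negbTE b12) (negbTE yb1) (negbTE yb2) p2r (eq_sym p2 y) yp2 rb2.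
Qed.

Lemma two_edges_off_root_coloring a b x y :
  5 <= #|T| -> (forall v, v \notin [:: r; b] -> e r v) -> e a b -> e x y ->
  r \notin [:: a; b; x; y] -> b \notin [:: x; y] -> px_le e (#|T| - 3).
Proof.
move=> T5 nbr eab exy; rewrite !inE !negb_or => /and4P[ra rb rx ry] /andP[bx b_y].
have ab := edge_neq e_simple eab; have xy := edge_neq e_simple exy.
have nbr' v w : v \notin [:: r; b; w] -> e r v.
  by rewrite !inE !negb_or => /and3P[vr vb _]; apply: nbr; rewrite !inE negb_or vr vb.
have [exa|ax] := eqVneq a x.
  subst x; apply: (@two_leaves_moved_coloring b a a y T5); rewrite ?eqxx //=.
  - by rewrite !inE !negb_or rb ra eq_sym ab.
  - by rewrite eq_sym.
  - by rewrite eq_sym.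
  - by rewrite eq_sym.
  - by rewrite e_simple.1.
  - by move=> v; apply: nbr'.
have [eya|ay] := eqVneq a y.
  subst y; apply: (@two_leaves_moved_coloring b a a x T5); rewrite ?eqxx //=.
  - by rewrite !inE !negb_or rb ra eq_sym ab.
  - by rewrite eq_sym.
  - by rewrite eq_sym.
  - by rewrite eq_sym.
  - by move=> v; apply: nbr'.
apply: (@two_leaves_moved_coloring b a y x T5); rewrite ?(negbTE ay) //=.
- by rewrite !inE !negb_or rb ry b_y.
- by rewrite eq_sym.
- by rewrite eq_sym.
- by move=> v; apply: nbr'.
Qed.
End LeavesMoved.

Lemma set1_exit (T : finType) (e : rel T) r p : (forall v, e p v -> v = r) ->
  forall u v, u \in [set p] -> v \notin [set p] -> e u v -> v = r.
Proof. by move=> p_pend u v /set1P-> _; apply: p_pend. Qed.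

Section LowerBounds.
Variables (T : finType) (e : rel T) (k m : nat) (c : T -> T -> nat).
Hypothesis c_proper : k_proper_coloring e k m c.
Hypothesis k_bounds : 3 <= k <= #|T|.

Lemma proper_tree_through x1 x2 x3 : exists (V : {set T}) (f : rel T),
  [/\ symmetric f, forall x y, f x y -> e x y,
      forall x y, x \in V -> y \in V -> connect f x y,
      [/\ x1 \in V, x2 \in V & x3 \in V] & proper_tree c f].
Proof.
have [|S sub cS] := @exists_superset_card T [set x1; x2; x3] k.
  case/andP: k_bounds => k3 ->; rewrite andbT; apply: leq_trans k3.
  by rewrite -setUA cardsU1 cards2; case: (_ \in _); case: (_ != _).
have [V [f [[f_sym f_sub] [[_ [f_conn _]] [SV f_proper]]]]] := c_proper.2 S cS.
exists V, f; split=> // [x y /f_sub[] //|].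
by rewrite !(subsetP SV) // (subsetP sub) // !inE eqxx ?orbT.
Qed.

Lemma root_exit_colors r (X : {set T}) x p1 p2 :
  x \in X -> p1 \notin X -> p2 \notin X ->
  (forall u v, u \in X -> v \notin X -> e u v -> v = r) ->
  (forall v, e p1 v -> v = r) -> (forall v, e p2 v -> v = r) ->
  exists2 u, u \in X & [&& e r u, c r u != c r p1 & c r u != c r p2].
Proof.
move=> xX p1X p2X X_exit p1_pend p2_pend.
have [V [f [f_sym f_sub f_conn [xV p1V p2V] f_proper]]] := proper_tree_through x p1 p2.
have exit (Y : {set T}) y z : y \in Y -> z \notin Y -> y \in V -> z \in V ->
    (forall u v, u \in Y -> v \notin Y -> e u v -> v = r) -> exists2 u, u \in Y & f r u.
  move=> yY zY yV zV Y_exit; have [u [v [uY vY fuv]]] := connect_exit_edge (f_conn y z yV zV) yY zY.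
  by exists u; rewrite // f_sym -(Y_exit u v uY vY (f_sub u v fuv)).
have pendant_edge p : p \notin X -> p \in V -> (forall v, e p v -> v = r) -> f r p.
  move=> pX pV /set1_exit p_exit.
  have xp : x \notin [set p] by rewrite inE; apply: contraNneq pX => <-.
  by have [_ /set1P->] := exit [set p] p x (set11 p) xp pV xV p_exit.
have [u uX fru] := exit X x p1 xX p1X xV p1V X_exit.
have neq_u p : p \notin X -> u != p by move=> pX; apply: contraNneq pX => <-.
exists u; rewrite // f_sub //=.
by rewrite !f_proper // ?pendant_edge // neq_u.
Qed.

Lemma pendant_colors_differ r u w : u != w ->
  (forall v, e u v -> v = r) -> (forall v, e w v -> v = r) -> c r u != c r w.
Proof.
move=> uw /set1_exit u_exit w_pend; have wu : w \notin [set u] by rewrite inE eq_sym.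
by have [_ /set1P-> /and3P[]] := root_exit_colors (set11 u) wu wu u_exit w_pend w_pend.
Qed.

Lemma card_le_colors r (A : {set T}) :
  (forall v, v \in A -> e r v) -> {in A &, forall u w, u != w -> c r u != c r w} ->
  #|A| <= m.
Proof.
move=> A_nbr A_diff; apply: (@card_le_of_injective_bounded _ _ (c r)).
  move=> u w uA wA cuw; apply/eqP/negPn/negP => uw.
  by move: (A_diff u w uA wA uw); rewrite cuw eqxx.
by move=> v vA; have [] := c_proper.1 r v (A_nbr v vA).
Qed.

Lemma card_le_colors_but_one r x y :
  y != r -> (forall v, v \notin [:: r; y] -> e r v) ->
  (forall v, v \notin [:: r; x; y] -> forall w, e v w -> w = r) ->
  (forall p, p \notin [:: r; x; y] -> c r x != c r p) ->
  #|T| - 2 <= m.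
Proof.
move=> yr nbr pend fresh.
have := @card_le_colors r [set v | v \notin [:: r; y]].
rewrite card_notin /= ?inE 1?eq_sym ?yr //; apply=> [v|u w uA wA uw].
  by rewrite inE; apply: nbr.
rewrite !inE !negb_or in uA wA; case/andP: uA => ur uy; case/andP: wA => wr wy.
have notin v : v != r -> v != x -> v != y -> v \notin [:: r; x; y].
  by rewrite !inE !negb_or => -> -> ->.
have [eux|ux] := eqVneq u x; first by subst u; apply/fresh/notin; rewrite // eq_sym.
have [ewx|wx] := eqVneq w x; first by subst w; rewrite eq_sym; apply/fresh/notin.
by apply: pendant_colors_differ uw _ _; apply: pend; apply: notin.
Qed.
End LowerBounds.

Definition star_at (T : finType) (e : rel T) r :=
  forall x y, e x y = ((x == r) && (y != r)) || ((y == r) && (x != r)).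

Definition splus_at (T : finType) (e : rel T) r a b :=
  uniq [:: r; a; b] /\ forall x y, e x y =
    [|| (x == r) && (y != r), (y == r) && (x != r), (x == a) && (y == b) | (x == b) && (y == a)].

Definition g0_at (T : finType) (e : rel T) r a z :=
  uniq [:: r; a; z] /\ forall x y, e x y =
    [|| [&& x == r, y != r & y != z], [&& y == r, x != r & x != z],
        (x == a) && (y == z) | (y == a) && (x == z)].

Section Bounds.
Variables (T : finType) (e : rel T) (k m : nat) (c : T -> T -> nat).
Hypothesis c_proper : k_proper_coloring e k m c.
Hypothesis k_bounds : 3 <= k <= #|T|.

Lemma star_lb r : star_at e r -> #|T| - 1 <= m.
Proof.
move=> str; rewrite subn1 -(cardsC1 r); apply: (@card_le_colors _ _ _ _ _ c_proper r) => [v|u w].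
  by rewrite !inE str eqxx => ->.
rewrite !inE => ur wr uw; apply: (pendant_colors_differ c_proper k_bounds uw) => v.
  by rewrite str (negbTE ur) /= andbT => /eqP.
by rewrite str (negbTE wr) /= andbT => /eqP.
Qed.

Lemma splus_lb r a b : splus_at e r a b -> #|T| - 2 <= m.
Proof.
move=> [u3 str]; move: (u3); rewrite /= !inE !negb_or => /and3P[/andP[ra rb] ab _].
have nbr v : v != r -> e r v by move=> vr; rewrite str eqxx vr.
have pend v : v \notin [:: r; a; b] -> forall w, e v w -> w = r.
  rewrite !inE !negb_or => /and3P[vr va vb] w.
  by rewrite str (negbTE vr) (negbTE va) (negbTE vb) /= andbT orbF => /eqP.
have ab_exit u v : u \in [set a; b] -> v \notin [set a; b] -> e u v -> v = r.
  rewrite !inE negb_or => /orP[]/eqP-> /andP[va vb]; rewrite str.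
    by rewrite (negbTE va) (negbTE vb) eq_sym (negbTE ra) /= !andbF !orbF => /andP[/eqP].
  by rewrite (negbTE va) (negbTE vb) eq_sym (negbTE rb) /= !andbF !orbF => /andP[/eqP].
have [fresh_a|/forallPn[p1]] := boolP [forall p, (p \notin [:: r; a; b]) ==> (c r a != c r p)].
  apply: (@card_le_colors_but_one _ _ _ _ _ c_proper k_bounds r a b).
  - by rewrite eq_sym.
  - by move=> v; rewrite !inE negb_or => /andP[/nbr].
  - exact: pend.
  - by move=> p; apply/implyP; apply: (forallP fresh_a).
rewrite negb_imply negbK => /andP[p1_out /eqP c_ap1].
apply: (@card_le_colors_but_one _ _ _ _ _ c_proper k_bounds r b a).
- by rewrite eq_sym.
- by move=> v; rewrite !inE negb_or => /andP[/nbr].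
- by move=> v; rewrite !inE !negb_or => /and3P[vr vb va]; apply: pend; rewrite !inE !negb_or vr va vb.
move=> p2; rewrite !inE !negb_or => /and3P[p2r p2b p2a].
have out p : p \notin [:: r; a; b] -> p \notin [set a; b].
  by rewrite !inE !negb_or => /and3P[_ -> ->].
have p2_out : p2 \notin [:: r; a; b] by rewrite !inE !negb_or p2r p2a p2b.
have [u /set2P[]-> /and3P[_ cu1 cu2] //] := root_exit_colors c_proper k_bounds (set21 a b)
  (out _ p1_out) (out _ p2_out) ab_exit (pend _ p1_out) (pend _ p2_out).
by move: cu1; rewrite c_ap1 eqxx.
Qed.

Lemma g0_lb r a z : g0_at e r a z -> #|T| - 2 <= m.
Proof.
move=> [u3 str]; move: (u3); rewrite /= !inE !negb_or => /and3P[/andP[ra rz] az _].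
have nrz : ~~ e r z by rewrite str; neq_simpl.
have pend v : v \notin [:: r; a; z] -> forall w, e v w -> w = r.
  by rewrite !inE !negb_or => /and3P[vr va vz] w; rewrite str; neq_simpl; move/eqP.
have az_exit u v : u \in [set a; z] -> v \notin [set a; z] -> e u v -> v = r.
  by rewrite !inE negb_or => /orP[]/eqP-> /andP[va vz]; rewrite str; neq_simpl; move/eqP.
apply: (@card_le_colors_but_one _ _ _ _ _ c_proper k_bounds r a z) => //.
- by rewrite eq_sym.
- by move=> v; rewrite !inE negb_or => /andP[vr vz]; rewrite str eqxx vr vz.
move=> p p_out; have p_notaz : p \notin [set a; z].
  by move: p_out; rewrite !inE !negb_or => /and3P[_ -> ->].
have [u /set2P[]-> /and3P[eru cu _] //] := root_exit_colors c_proper k_bounds (set21 a z)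
  p_notaz p_notaz az_exit (pend _ p_out) (pend _ p_out).
by rewrite eru in nrz.
Qed.
End Bounds.

Lemma splus_ub (T : finType) (e : rel T) r a b :
  simple_graph e -> 5 <= #|T| -> splus_at e r a b -> px_le e (#|T| - 2).
Proof.
move=> e_simple T5 [u3 str]; move: (u3); rewrite /= !inE !negb_or => /and3P[/andP[ra rb] ab _].
apply: (@one_leaf_moved_coloring _ _ r e_simple b a).
- exact: ltnW T5.
- distinct.
- by rewrite str !eqxx /= !orbT.
- by move=> v; rewrite !inE negb_or => /andP[vr _]; rewrite str eqxx vr.
Qed.

Lemma g0_ub (T : finType) (e : rel T) r a z :
  simple_graph e -> 5 <= #|T| -> g0_at e r a z -> px_le e (#|T| - 2).
Proof.
move=> e_simple T5 [u3 str]; move: (u3); rewrite /= !inE !negb_or => /and3P[/andP[ra rz] az _].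
apply: (@one_leaf_moved_coloring _ _ r e_simple z a).
- exact: ltnW T5.
- distinct.
- by rewrite str !eqxx /= !orbT.
- by move=> v; rewrite !inE negb_or => /andP[vr vz]; rewrite str eqxx vr vz.
Qed.

Lemma exists_bfs_parent (T : finType) (e : rel T) r : connected_graph e ->
  exists (par : T -> T) (dep : T -> nat),
    [/\ forall v, v != r -> e (par v) v, forall v, v != r -> dep (par v) < dep v
      & forall v, e r v -> par v = r].
Proof.
move=> e_conn; pose P v n := [exists t : n.-tuple T, path e r t && (last r t == v)].
have P_path v (s : seq T) : path e r s -> last r s = v -> P v (size s).
  by move=> pth lst; apply/existsP; exists (in_tuple s); rewrite pth lst eqxx.
have exP v : exists n, P v n.
  by have /connectP[s pth lst] := e_conn r v; exists (size s); apply: P_path.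
pose dep v := ex_minn (exP v).
have dep_min v n : P v n -> dep v <= n by rewrite /dep; case: ex_minnP => d _; apply.
have dep_r : dep r = 0 by apply/eqP; rewrite -leqn0 (dep_min r 0) // (P_path r [::]).
have closer v : v != r -> exists u, e u v && (dep u < dep v).
  move=> vr; rewrite /dep; case: ex_minnP => n /existsP[t /andP[pth /eqP lst]] _.
  case/lastP: (tval t) pth lst (size_tuple t) => [_ lst|s w]; first by rewrite -lst eqxx in vr.
  rewrite rcons_path last_rcons size_rcons => /andP[pth ew] <- <-.
  by exists (last r s); rewrite ew ltnS (dep_min _ _ (P_path _ s pth erefl)).
exists (fun v => if e r v then r else odflt v [pick u | e u v && (dep u < dep v)]), dep.
split=> [v vr|v vr|v ->//]; case: ifP => // erv.
- by case: pickP => [u /andP[]|none] //; have [u] := closer v vr; rewrite none.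
- rewrite dep_r lt0n; apply: contra vr => /eqP dv0.
  have /existsP[t /andP[_]] : P v 0 by rewrite -dv0 /dep; case: ex_minnP.
  by rewrite (tuple0 t) /= eq_sym.
- by case: pickP => [u /andP[]|none] //; have [u] := closer v vr; rewrite none.
Qed.

Definition degree (T : finType) (e : rel T) v := #|[set w | e v w]|.

Section Classification.
Variables (T : finType) (e : rel T).
Hypothesis e_simple : simple_graph e.
Hypothesis e_conn : connected_graph e.
Hypothesis T5 : 5 <= #|T|.

Let e_sym : symmetric e := e_simple.1.

Lemma degree_ge (v : T) (s : seq T) : uniq s -> (forall w, w \in s -> e v w) ->
  size s <= degree e v.
Proof. by move=> us sv; apply: uniq_size_le_card => // w /sv; rewrite inE. Qed.

Lemma max_degree_ge2 r d : (forall v, degree e v <= degree e r) ->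
  d != r -> ~~ e r d -> 2 <= degree e r.
Proof.
move=> r_max dr nrd; rewrite leqNgt; apply/negP => deg_r.
have [_ [c [/set1P-> cr erc]]] := connect_exit_edge (e_conn r d) (set11 r) ltac:(by rewrite inE).
have only_c w : e r w -> w = c.
  move=> erw; apply: contraTeq deg_r => wc; rewrite -leqNgt.
  apply: (@degree_ge r [:: c; w]); first by rewrite /= inE eq_sym wc.
  by move=> x; rewrite !inE => /orP[]/eqP->.
have d_out : d \notin [set r; c] by rewrite !inE negb_or dr; apply: contraNneq nrd => ->.
have [u [v [/set2P[]-> v_out euv]]] := connect_exit_edge (e_conn r d) (set21 r c) d_out.
  by move: v_out; rewrite (only_c v euv) !inE eqxx orbT.
move: v_out; rewrite !inE negb_or => /andP[vr vc].
have := r_max c; rewrite leqNgt => /negP; apply; apply: leq_trans deg_r _.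
apply: (@degree_ge c [:: r; v]); first by rewrite /= inE eq_sym vr.
by move=> x; rewrite !inE => /orP[]/eqP->; rewrite // e_sym.
Qed.

Lemma low_degree_coloring r d1 d2 : (forall v, degree e v <= degree e r) ->
  uniq [:: r; d1; d2] -> ~~ e r d1 -> ~~ e r d2 -> px_le e (#|T| - 3).
Proof.
move=> r_max u3 nrd1 nrd2 k; move: (u3); rewrite /= !inE !negb_or => /and3P[/andP[rd1 rd2] d12 _].
have [par [dep [par_edge dep_par par_r]]] := exists_bfs_parent r e_conn.
have par_far d : d != r -> ~~ e r d -> par d != r.
  by move=> dr nrd; apply: contraNneq nrd => <-; apply: par_edge.
have [||w1 [w2 [w1N w2N w12 w1p w2p]]] := @pick_two_avoiding T [set w | e r w] (par d1) (par d2).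
- by apply: (max_degree_ge2 r_max (d := d1)); rewrite // eq_sym.
- move=> p12 ep1; apply: leq_trans (r_max (par d1)).
  apply: (@degree_ge _ [:: r; d1; d2]) => // w; rewrite !inE => /or3P[]/eqP->.
  + by rewrite e_sym; rewrite inE in ep1.
  + by apply: par_edge; rewrite eq_sym.
  + by rewrite p12; apply: par_edge; rewrite eq_sym.
rewrite !inE in w1N w2N.
have nbr_neq w d : e r w -> ~~ e r d -> w != d by move=> erw; apply: contraNneq => <-.
apply: (@two_merges_coloring T e r par dep par_edge dep_par e_sym w1 d1 w2 d2).
- have rw1 := edge_neq e_simple w1N; have rw2 := edge_neq e_simple w2N.
  have w1d1 := nbr_neq _ _ w1N nrd1; have w1d2 := nbr_neq _ _ w1N nrd2.
  have w2d1 := nbr_neq _ _ w2N nrd1; have w2d2 := nbr_neq _ _ w2N nrd2.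
  distinct.
- have pd1 : par d1 != r by apply: par_far; rewrite // eq_sym.
  by rewrite /parent_edges_apart (par_r w1 w1N) pd1 eq_sym w1p rd1.
- have pd2 : par d2 != r by apply: par_far; rewrite // eq_sym.
  by rewrite /parent_edges_apart (par_r w2 w2N) pd2 eq_sym w2p rd2.
Qed.

Lemma dominating_cases r : (forall v, v != r -> e r v) ->
  [\/ px_le e (#|T| - 3), star_at e r | exists a b, splus_at e r a b].
Proof.
move=> nbr; have er y : e r y = (y != r).
  by have [->|/nbr] := eqVneq y r; [rewrite e_simple.2 | move=> ->].
have [/existsP[a /existsP[b /and3P[ar br eab]]]|none] :=
  boolP [exists x, exists y, [&& x != r, y != r & e x y]]; last first.
  apply: Or32 => x y; have [->|xr] := eqVneq x r; first by rewrite er /= andbF orbF.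
  have [->|yr] := eqVneq y r; first by rewrite e_sym er /= xr.
  rewrite /=; apply/negbTE; apply: contra none => exy.
  by apply/existsP; exists x; apply/existsP; exists y; rewrite xr yr exy.
have ab := edge_neq e_simple eab.
have [/existsP[x /existsP[y /and4P[xr yr exy other]]]|none] := boolP [exists x, exists y,
    [&& x != r, y != r, e x y & ~~ ((x == a) && (y == b) || (x == b) && (y == a))]].
  apply: Or31; have nbr' w v : v \notin [:: r; w] -> e r v by rewrite !inE negb_or => /andP[/nbr].
  have [bxy|bxy] := boolP (b \in [:: x; y]).
    apply: (@two_edges_off_root_coloring T e r e_simple b a x y T5).
    - exact: nbr'.
    - by rewrite e_sym.
    - exact: exy.
    - by rewrite !inE !negb_or !(eq_sym r) br ar xr yr.
    apply/negP; rewrite !inE => /orP[]/eqP eax; move: bxy; rewrite !inE => /orP[]/eqP ebx;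
      by subst; rewrite ?eqxx ?orbT in other ab.
  apply: (@two_edges_off_root_coloring T e r e_simple a b x y T5) => //.
  - exact: nbr'.
  - by rewrite !inE !negb_or !(eq_sym r) br ar xr yr.
apply: Or33; exists a, b; split=> [|x y]; first by rewrite /= !inE !negb_or !(eq_sym r) ar br ab.
have [->|xr] := eqVneq x r.
  by rewrite er /= !andbF (eq_sym r a) (negbTE ar) (eq_sym r b) (negbTE br) !orbF.
have [->|yr] := eqVneq y r.
  by rewrite e_sym er xr.
rewrite /=; apply/idP/idP => [exy|/orP[]/andP[/eqP-> /eqP->] //]; last by rewrite e_sym.
apply: contraR none => other.
by apply/existsP; exists x; apply/existsP; exists y; rewrite xr yr exy other.
Qed.

Lemma near_dominating_cases r z : z != r -> ~~ e r z -> (forall v, v \notin [:: r; z] -> e r v) ->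
  px_le e (#|T| - 3) \/ exists a, g0_at e r a z.
Proof.
move=> zr nrz nbr.
have [_ [a [/set1P-> az eza]]] :=
  connect_exit_edge (e_conn z r) (set11 z) ltac:(by rewrite inE eq_sym).
rewrite inE in az; have ar : a != r by apply: contraNneq nrz => <-; rewrite e_sym.
have [/existsP[b /andP[ba ezb]]|only_a] := boolP [exists b, (b != a) && e z b].
  have br : b != r by apply: contraNneq nrz => <-; rewrite e_sym.
  left; apply: (@two_leaves_moved_coloring T e r e_simple z a b z T5) => //.
  - by rewrite /= !inE !negb_or !(eq_sym r) zr br (edge_neq e_simple ezb).
  - by rewrite eq_sym (negbTE ba).
  - by rewrite e_sym.
  - by move=> v; rewrite !inE !negb_or => /and3P[vr vz _]; apply: nbr; rewrite !inE negb_or vr vz.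
have ez y : e z y = (y == a).
  by apply/idP/eqP => [ezy|->//]; apply/eqP; apply: contraR only_a => ya; apply/existsP; exists y; rewrite ya.
have [/existsP[x /existsP[y /and3P[xout yout exy]]]|none] :=
  boolP [exists x, exists y, [&& x \notin [:: r; z], y \notin [:: r; z] & e x y]].
  move: xout yout; rewrite !inE !negb_or => /andP[xr xz] /andP[yr yz].
  left; apply: (@two_edges_off_root_coloring T e r e_simple a z x y T5) => //.
  - by rewrite e_sym.
  - by rewrite !inE !negb_or !(eq_sym r) ar zr xr yr.
  - by rewrite !inE negb_or !(eq_sym z) xz yz.
have er y : e r y = (y != r) && (y != z).
  have [->|yr] := eqVneq y r; first by rewrite e_simple.2.
  have [->|yz] := eqVneq y z; first exact: negbTE.
  by apply: nbr; rewrite !inE negb_or yr yz.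
right; exists a; split=> [|x y]; first by rewrite /= !inE !negb_or !(eq_sym r) ar zr az.
have [->|xr] := eqVneq x r; first by rewrite er; neq_simpl.
have [->|xz] := eqVneq x z; first by rewrite ez; neq_simpl.
have [->|yr] := eqVneq y r; first by rewrite e_sym er; neq_simpl.
have [->|yz] := eqVneq y z; first by rewrite e_sym ez; neq_simpl.
neq_simpl; apply/negbTE; apply: contra none => exy.
by apply/existsP; exists x; apply/existsP; exists y; rewrite !inE !negb_or xr xz yr yz exy.
Qed.

Lemma classify : [\/ px_le e (#|T| - 3), exists r, star_at e r,
  exists r a b, splus_at e r a b | exists r a z, g0_at e r a z].
Proof.
have [r0 _] : exists r0 : T, r0 \in T by apply/card_gt0P; apply: leq_trans T5.
case: (@arg_maxnP T r0 xpredT (degree e) erefl) => r _ r_max.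
have [/forallP nbr|/forallPn[z]] := boolP [forall v, (v != r) ==> e r v].
  case: (dominating_cases (fun v => implyP (nbr v))) => [?|?|[a [b ?]]].
  - exact: Or41.
  - by apply: Or42; exists r.
  - by apply: Or43; exists r, a, b.
rewrite negb_imply => /andP[zr nrz].
have [/forallP nbr|/forallPn[w]] := boolP [forall v, (v \notin [:: r; z]) ==> e r v].
  case: (near_dominating_cases zr nrz (fun v => implyP (nbr v))) => [?|[a ?]].
  - exact: Or41.
  - by apply: Or44; exists r, a, z.
rewrite negb_imply => /andP[wout nrw]; apply: Or41.
apply: (low_degree_coloring (fun v => r_max v isT) _ nrz nrw).
by move: wout; rewrite /= !inE !negb_or (eq_sym r z) zr => /andP[wr wz]; rewrite !(eq_sym _ w) wr wz.
Qed.
End Classification.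

From mathcomp Require Import fingroup perm.

Lemma exists_perm3 (T : finType) (x1 x2 x3 y1 y2 y3 : T) :
  uniq [:: x1; x2; x3] -> uniq [:: y1; y2; y3] ->
  exists s : {perm T}, [/\ s x1 = y1, s x2 = y2 & s x3 = y3].
Proof.
rewrite /= !inE !negb_or => /and3P[/andP[x12 x13] x23 _] /and3P[/andP[y12 y13] y23 _].
pose s1 := tperm x1 y1; pose s2 := tperm (s1 x2) y2; pose s3 := tperm (s2 (s1 x3)) y3.
have neq_perm (s : {perm T}) u v : u != v -> s u != s v by rewrite (inj_eq perm_inj).
have s1x1 : s1 x1 = y1 := tpermL x1 y1.
have s2x2 : s2 (s1 x2) = y2 := tpermL _ _.
have s2y1 : s2 y1 = y1.
  by apply: tpermD; rewrite 1?eq_sym // -s1x1 neq_perm // eq_sym.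
have s3y1 : s3 y1 = y1.
  by apply: tpermD; rewrite 1?eq_sym // -s2y1 -s1x1 !neq_perm // eq_sym.
have s3y2 : s3 y2 = y2.
  by apply: tpermD; rewrite 1?eq_sym // -s2x2 !neq_perm // eq_sym.
by exists (s1 * s2 * s3)%g; rewrite !permM s1x1 s2y1 s3y1 s2x2 s3y2 tpermL.
Qed.

Lemma isomorphic_of_triple (T : finType) (e : rel T) (R : rel 'I_#|T|) (r a b : T)
    (o0 o1 o2 : 'I_#|T|) :
  uniq [:: r; a; b] -> uniq [:: o0; o1; o2] ->
  (forall phi : T -> 'I_#|T|, injective phi -> phi r = o0 -> phi a = o1 -> phi b = o2 ->
     forall x y, e x y = R (phi x) (phi y)) ->
  isomorphic e #|T| R.
Proof.
move=> u3 o3 eR.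
have u3' : uniq (map enum_rank [:: r; a; b]) by rewrite (map_inj_uniq enum_rank_inj).
have [s [s0 s1 s2]] := exists_perm3 u3' o3.
pose phi x := s (enum_rank x).
have phi_inj : injective phi by move=> x y /perm_inj /enum_rank_inj.
exists phi; split; last exact: eR.
exists (fun o => enum_val ((s^-1)%g o)) => [x|o]; first by rewrite /phi permK enum_rankK.
by rewrite /phi enum_valK permKV.
Qed.

Lemma eq_via_injective (T : finType) n (phi : T -> 'I_n) x v (o : 'I_n) :
  injective phi -> phi v = o -> (x == v) = (nat_of_ord (phi x) == o).
Proof. by move=> phi_inj <-; rewrite val_eqE (inj_eq phi_inj). Qed.

Lemma splus_isomorphic (T : finType) (e : rel T) r a b :
  splus_at e r a b -> isomorphic e #|T| (Splus #|T|).
Proof.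
move=> [u3 str]; have T3 := uniq_size_le_card_type u3.
apply: (@isomorphic_of_triple _ _ _ r a b
  (Ordinal (ltnW (ltnW T3))) (Ordinal (ltnW T3)) (Ordinal T3)) => //.
move=> phi phi_inj p0 p1 p2 x y.
by rewrite str /Splus /= !(eq_via_injective x phi_inj p0) !(eq_via_injective y phi_inj p0)
  !(eq_via_injective x phi_inj p1) !(eq_via_injective y phi_inj p1)
  !(eq_via_injective x phi_inj p2) !(eq_via_injective y phi_inj p2).
Qed.

Lemma between_1_and_pred2 n b : b < n -> (1 <= b <= n - 2) = (b != 0) && (b != n - 1).
Proof. by move=> bn; apply/idP/idP => [/andP[]|/andP[/eqP b0 /eqP bn1]]; [|apply/andP]; lia. Qed.

Lemma pred_neq01 n : 2 < n -> (0 != n - 1) && (1 != n - 1).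
Proof. lia. Qed.

Lemma g0_isomorphic (T : finType) (e : rel T) r a z :
  g0_at e r a z -> isomorphic e #|T| (G0 #|T|).
Proof.
move=> [u3 str]; have T3 : 3 <= #|T| := uniq_size_le_card_type u3.
have last_lt : #|T| - 1 < #|T| by rewrite subn1 ltn_predL (ltnW (ltnW T3)).
apply: (@isomorphic_of_triple _ _ _ r a z
  (Ordinal (ltnW (ltnW T3))) (Ordinal (ltnW T3)) (Ordinal last_lt)) => //.
  by rewrite /= !inE -!val_eqE /= andbT; apply: pred_neq01 T3.
move=> phi phi_inj p0 p1 p2 x y.
rewrite str /G0 /= !(between_1_and_pred2 (ltn_ord (phi _))).
by rewrite !(eq_via_injective x phi_inj p0) !(eq_via_injective y phi_inj p0)
  !(eq_via_injective x phi_inj p1) !(eq_via_injective y phi_inj p1)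
  !(eq_via_injective x phi_inj p2) !(eq_via_injective y phi_inj p2).
Qed.

Lemma splus_of_isomorphic (T : finType) (e : rel T) :
  3 <= #|T| -> isomorphic e #|T| (Splus #|T|) -> exists r a b, splus_at e r a b.
Proof.
move=> T3 [phi [[g phiK gK] eR]].
have eq_g x o : (x == g o) = (nat_of_ord (phi x) == o) := eq_via_injective x (can_inj phiK) (gK o).
pose o0 := Ordinal (ltnW (ltnW T3)); pose o1 := Ordinal (ltnW T3); pose o2 := Ordinal T3.
exists (g o0), (g o1), (g o2); split=> [|x y].
  by rewrite (map_inj_uniq (can_inj gK) [:: o0; o1; o2]).
by rewrite eR /Splus /= !eq_g.
Qed.

Lemma g0_of_isomorphic (T : finType) (e : rel T) :
  3 <= #|T| -> isomorphic e #|T| (G0 #|T|) -> exists r a z, g0_at e r a z.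
Proof.
move=> T3 [phi [[g phiK gK] eR]].
have eq_g x o : (x == g o) = (nat_of_ord (phi x) == o) := eq_via_injective x (can_inj phiK) (gK o).
have last_lt : #|T| - 1 < #|T| by rewrite subn1 ltn_predL (ltnW (ltnW T3)).
pose o0 := Ordinal (ltnW (ltnW T3)); pose o1 := Ordinal (ltnW T3); pose o2 := Ordinal last_lt.
exists (g o0), (g o1), (g o2); split=> [|x y].
  rewrite (map_inj_uniq (can_inj gK) [:: o0; o1; o2]) /= !inE -!val_eqE /= andbT.
  exact: pred_neq01 T3.
by rewrite eR /G0 /= !(between_1_and_pred2 (ltn_ord (phi _))) !eq_g.
Qed.

Theorem mainTheorem17 (T : finType) (e : rel T) :
  simple_graph e -> connected_graph e -> 5 <= #|T| ->
  forall k : nat, 3 <= k <= #|T| ->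
  (px_k_eq e k (#|T| - 2) <->
   isomorphic e #|T| (Splus #|T|) \/ isomorphic e #|T| (G0 #|T|)).
Proof.
move=> e_simple e_conn T5 k k_bounds; have T3 : 3 <= #|T| by apply: leq_trans T5.
split=> [[[c c_proper] px_min]|].
  case: (classify e_simple e_conn T5) => [ub3|[r star]|[r [a [b sp]]]|[r [a [z g0]]]].
  - by have [c' /px_min] := ub3 k; lia.
  - by have := star_lb c_proper k_bounds star; lia.
  - by left; apply: splus_isomorphic sp.
  - by right; apply: g0_isomorphic g0.
case=> [/(splus_of_isomorphic T3)[r [a [b sp]]]|/(g0_of_isomorphic T3)[r [a [z g0]]]].
  split; first exact: (splus_ub e_simple T5 sp k).
  by move=> m c c_proper; apply: (splus_lb c_proper k_bounds sp).
split; first exact: (g0_ub e_simple T5 g0 k).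
by move=> m c c_proper; apply: (g0_lb c_proper k_bounds g0).
Qed.
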